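(* Let $T_1,T_2,\dots$ be independent exponential random variables with parameters $\lambda_i=4\sqrt{i+1}$, and for constants $c_1,c_2>0$ and $k\ge1$ let $G=\big\{|\{1\le i\le k: T_i\ge c_2/\sqrt{i}\}|>c_1k\big\}$. For any $\tilde c\in(0,\infty)$ there exist $c_1,c_2>0$ such that for all sufficiently large $k$, $\mathbf P(G^c)\le\exp(-\tilde c k)$. *)

From HB Require Import structures.
From mathcomp Require Import all_boot all_order all_algebra.
From mathcomp Require Import all_classical all_reals all_analysis.
Set Implicit Arguments. Unset Strict Implicit. Unset Printing Implicit Defensive.
Import Order.TTheory GRing.Theory Num.Theory.
Local Open Scope classical_set_scope.
Local Open Scope ring_scope.

(* Mutual independence of a family of real random variables (not in the
   library): for every finite set of distinct indices >= 1 (the family is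
   T_1, T_2, ...; index 0 is unused) and every family of
   Borel sets, the joint preimage probability factorizes. *)
Definition mutually_independent_rv d (T : measurableType d) (R : realType)
    (P : probability T R) (X : nat -> {RV P >-> R}) : Prop :=
  forall (s : seq nat) (B : nat -> set R),
    uniq s -> all (leq 1) s -> (forall i, measurable (B i)) ->
    P (\big[setI/setT]_(i <- s) (X i @^-1` B i)) =
    (\prod_(i <- s) P (X i @^-1` B i))%E.

Definition exponential_rv d (T : measurableType d) (R : realType)
    (P : probability T R) (Y : {RV P >-> R}) (rate : R) : Prop :=
  forall A : set R, measurable A -> P (Y @^-1` A) = exponential_prob rate A.

Definition lam (R : realType) (i : nat) : R := 4 * Num.sqrt (i.+1)%:R.

Definition Gc d (T : measurableType d) (R : realType) (P : probability T R)
    (X : nat -> {RV P >-> R}) (c1 c2 : R) (k : nat) : set T :=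
  [set w | (count (fun i => c2 / Num.sqrt i%:R <= X i w) (iota 1 k))%:R
             <= c1 * k%:R].

From HB Require Import structures.
From mathcomp Require Import all_boot all_order all_algebra.
From mathcomp Require Import all_classical all_reals all_analysis.
From mathcomp Require Import ring lra zify.
Set Implicit Arguments. Unset Strict Implicit. Unset Printing Implicit Defensive.
Import Order.TTheory GRing.Theory Num.Theory.
Local Open Scope classical_set_scope.
Local Open Scope ring_scope.

(* With c1 = 1/2, on G^c at least half of the events A_i = {T_i < c2/sqrt i},
   1 <= i <= k, occur.  Since P(A_i) <= lambda_i c2/sqrt i <= 8 c2 =: q,
   independence bounds the probability that any j given events occur together
   by q^j, and a union bound over the 2^k occurrence patterns yields
   P(G^c) <= 2^k q^(k/2).  Choosing q = (exp(-ct)/2)^2 makes this exp(-ct k). *)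

Lemma exponential_prob_itvNy0 (R : realType) (rate : R) :
  exponential_prob rate `]-oo, 0[ = 0%E.
Proof.
rewrite /exponential_prob integral0_eq // => x /=.
by rewrite in_itv /= => /lt0_exponential_pdf ->.
Qed.

Lemma exponential_rv_lt_le d (T : measurableType d) (R : realType)
    (P : probability T R) (Y : {RV P >-> R}) (rate a : R) :
  exponential_rv Y rate -> 0 < a -> (P (Y @^-1` `]-oo, a[) <= (rate * a)%:E)%E.
Proof.
move=> HY a0.
have cover : `]-oo, a[%classic `<=` `]-oo, 0[%classic `|` `[0, a]%classic.
  move=> x /=; rewrite !in_itv /= => xa.
  by case: ltP => _; [left | right; rewrite ltW].
have mY (i : interval R) : measurable (Y @^-1` [set` i]).
  exact: measurable_funPTI (measurable_itv i).
apply: (@le_trans _ _ (P (Y @^-1` `]-oo, 0%R[) + P (Y @^-1` `[0%R, a]))%E).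
  apply: le_trans (measureU2 _ (mY _) (mY _)); rewrite -preimage_setU.
  apply: le_measure; rewrite ?inE; last exact: preimage_subset.
    exact: mY.
  by rewrite preimage_setU; apply: measurableU.
rewrite !HY // exponential_prob_itvNy0 add0e exponential_prob_itv0c // -EFinB lee_fin.
have := expR_ge1Dx (- rate * a); rewrite mulNr; lra.
Qed.

Lemma prode_le_expr (R : realDomainType) (I : eqType) (s : seq I)
    (f : I -> \bar R) (q : R) :
  (forall i, 0 <= f i)%E -> {in s, forall i, (f i <= q%:E)%E} ->
  (\prod_(i <- s) f i <= (q ^+ size s)%:E)%E.
Proof.
move=> f0; elim: s => [|i s IH] fq; first by rewrite big_nil.
rewrite big_cons exprS EFinM lee_pmul ?fq ?mem_head ?prode_ge0 //.
by apply: IH => j js; apply/fq/mem_behead.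
Qed.

Lemma mutually_independent_bigsetI_le d (T : measurableType d) (R : realType)
    (P : probability T R) (X : nat -> {RV P >-> R}) (B : nat -> set R) (q : R)
    (t : seq nat) :
  mutually_independent_rv X -> (forall i, measurable (B i)) ->
  uniq t -> all (leq 1) t -> {in t, forall i, (P (X i @^-1` B i) <= q%:E)%E} ->
  (P (\big[setI/setT]_(i <- t) X i @^-1` B i) <= (q ^+ size t)%:E)%E.
Proof.
move=> indep mB t_uniq t_pos PB; rewrite indep //.
by apply: prode_le_expr => // i; exact: measure_ge0.
Qed.

Lemma lam_mul_le (R : realType) (j : nat) (q : R) : (1 <= j)%N -> 0 <= q ->
  lam R j * (q / 8 / Num.sqrt j%:R) <= q.
Proof.
move=> j1 q0.
have sj0 : 0 < Num.sqrt (j%:R : R) by rewrite sqrtr_gt0 ltr0n.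
have sqrt_succ : Num.sqrt (j.+1%:R : R) <= 2 * Num.sqrt j%:R.
  have -> : 2 * Num.sqrt (j%:R : R) = Num.sqrt (2 ^+ 2 * j%:R).
    by rewrite sqrtrM ?sqrtr_sqr ?ger0_norm // exprn_ge0.
  by rewrite ler_sqrt ?mulr_ge0 ?exprn_ge0 // -natrX -natrM ler_nat; lia.
have -> : lam R j * (q / 8 / Num.sqrt j%:R) = Num.sqrt j.+1%:R / (2 * Num.sqrt j%:R) * q.
  by rewrite /lam; field; rewrite gt_eqF.
by rewrite ler_piMl // ler_pdivrMr ?mul1r // mulr_gt0.
Qed.

Lemma exponential_lam_lt_le d (T : measurableType d) (R : realType)
    (P : probability T R) (Y : {RV P >-> R}) (j : nat) (q : R) :
  (1 <= j)%N -> 0 < q -> exponential_rv Y (lam R j) ->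
  (P (Y @^-1` `]-oo, (q / 8 / Num.sqrt j%:R)%R[) <= q%:E)%E.
Proof.
move=> j1 q0 HY; apply: le_trans (exponential_rv_lt_le HY _) _.
  by rewrite !divr_gt0 // sqrtr_gt0 ltr0n.
by rewrite lee_fin lam_mul_le // ltW.
Qed.

Lemma sqr_expr_uphalf_le (R : numDomainType) (r : R) (k : nat) :
  0 <= r <= 1 -> (r ^+ 2) ^+ uphalf k <= r ^+ k.
Proof. by move=> /andP[r0 r1]; rewrite -exprM ler_wiXn2l //; lia. Qed.

Definition occurrences (T : Type) (A : nat -> set T) (s : seq nat) (w : T) : nat :=
  count (fun i => w \in A i) s.

Lemma bigsetI_allP (T : Type) (I : choiceType) (s : seq I) (F : I -> set T)
    (w : T) :
  (\big[setI/setT]_(i <- s) F i) w <-> all (fun i => w \in F i) s.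
Proof.
rewrite -bigcap_seq; split => [Fw|/allP Fw i si].
  by apply/allP => i si; apply/mem_set/Fw.
exact/set_mem/Fw.
Qed.

Lemma Boole_inequality_seq d (T : ringOfSetsType d) (R : realFieldType)
    (mu : {content set T -> \bar R}) (I : Type) (s : seq I) (P : pred I)
    (F : I -> set T) :
  (forall i, P i -> measurable (F i)) ->
  (mu (\big[setU/set0]_(i <- s | P i) F i) <= \sum_(i <- s | P i) mu (F i))%E.
Proof.
move=> mF; elim: s => [|i s IH]; first by rewrite !big_nil measure0.
rewrite !big_cons; case: ifP => // Pi.
apply: le_trans (measureU2 _ (mF _ Pi) (bigsetU_measurable _ mF)) _.
exact: leeD.
Qed.

Section count_events.
Context d (T : algebraOfSetsType d) (R : realFieldType).
Variable mu : {content set T -> \bar R}.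
Variable A : nat -> set T.
Hypothesis mA : forall i, measurable (A i).

Lemma occurrences_geE (s : seq nat) (m : nat) :
  [set w | (m <= occurrences A s w)%N] =
  \big[setU/set0]_(b : (size s).-tuple bool | (m <= count id b)%N)
    \big[setI/setT]_(i <- mask b s) A i.
Proof.
rewrite -bigcup_seq_cond; apply/seteqP; split => w /=.
  move=> mw; exists (map_tuple (fun i => w \in A i) (in_tuple s)).
    by rewrite /= mem_index_enum count_map.
  by apply/bigsetI_allP; rewrite -filter_mask filter_all.
case=> b /= /andP[_ mb] /bigsetI_allP; rewrite all_count => /eqP cnt.
rewrite (leq_trans mb) // -(size_mask (size_tuple b)) -cnt.
exact: leq_count_mask.
Qed.

Lemma measure_occurrences_ge_le (s : seq nat) (m : nat) (q : R) :
  0 <= q <= 1 ->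
  (forall t, subseq t s -> (mu (\big[setI/setT]_(i <- t) A i) <= (q ^+ size t)%:E)%E) ->
  (mu [set w | (m <= occurrences A s w)%N] <= (q ^+ m *+ 2 ^ size s)%:E)%E.
Proof.
move=> /andP[q0 q1] indep; rewrite occurrences_geE.
apply: le_trans (Boole_inequality_seq mu _ _) _ => [b _|].
  exact: bigsetI_measurable.
apply: (@le_trans _ _ (\sum_(b : (size s).-tuple bool) (q ^+ m)%:E)%E); last first.
  by rewrite sumEFin sumr_const card_tuple card_bool.
rewrite big_mkcond /=; apply: lee_sum => b _; case: ifP => mb; last first.
  by rewrite lee_fin exprn_ge0.
apply: le_trans (indep _ (mask_subseq b s)) _.
by rewrite lee_fin size_mask ?size_tuple // ler_wiXn2l.
Qed.

End count_events.

Lemma Gc_half_occurrencesE d (T : measurableType d) (R : realType)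
    (P : probability T R) (X : nat -> {RV P >-> R}) (c2 : R) (k : nat) :
  Gc X (1 / 2) c2 k =
  [set w | (uphalf k <=
     occurrences (fun i => X i @^-1` `]-oo, c2 / Num.sqrt i%:R[) (iota 1 k) w)%N].
Proof.
rewrite /Gc; apply: eq_set => w; congr is_true.
set p := fun i => c2 / Num.sqrt i%:R <= X i w.
rewrite /occurrences [X in (_ <= X)%N](@eq_count _ _ (predC p)); last first.
  move=> i; rewrite /= -ltNge.
  by apply/idP/idP => [/set_mem | ?]; [| apply: mem_set]; rewrite /= in_itv.
have := count_predC p (iota 1 k); rewrite size_iota.
rewrite -(ler_pM2l (_ : 0 < 2)) // mulrA mul1r divff // mul1r -natrM ler_nat.
by move=> count_k; apply/idP/idP; lia.
Qed.

Theorem mainTheorem6 (R : realType) (d : measure_display) (T : measurableType d)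
    (P : probability T R) (X : nat -> {RV P >-> R}) :
  mutually_independent_rv X ->
  (forall i, (1 <= i)%N -> exponential_rv (X i) (lam R i)) ->
  forall ct : R, 0 < ct ->
  exists c1 c2 : R, [/\ 0 < c1, 0 < c2 &
    exists K : nat, forall k : nat, (K <= k)%N -> (1 <= k)%N ->
      (P (Gc X c1 c2 k) <= (expR (- (ct * k%:R)))%:E)%E].
Proof.
move=> indep expo ct ct0.
pose r := expR (- ct) / 2; pose q := r ^+ 2.
have r01 : 0 <= r <= 1.
  have : expR (- ct) < 1 by rewrite expR_lt1 oppr_lt0.
  by have := expR_gt0 (- ct); rewrite /r; lra.
have q0 : 0 < q by rewrite exprn_gt0 // divr_gt0 ?expR_gt0.
exists (1 / 2), (q / 8); split => //; first by rewrite divr_gt0.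
exists 0%N => k _ _; rewrite Gc_half_occurrencesE.
pose B i := `]-oo, q / 8 / Num.sqrt i%:R[%classic.
have PA_indep t : subseq t (iota 1 k) ->
    (P (\big[setI/setT]_(i <- t) X i @^-1` B i) <= (q ^+ size t)%:E)%E.
  move=> tk; have t_pos i : i \in t -> (1 <= i)%N.
    by move/(mem_subseq tk); rewrite mem_iota => /andP[].
  apply: mutually_independent_bigsetI_le => // [i|||i /t_pos i1].
  - exact: measurable_itv.
  - exact: subseq_uniq tk (iota_uniq 1 k).
  - exact/allP.
  - exact: exponential_lam_lt_le (expo i i1).
apply: le_trans (measure_occurrences_ge_le _ _ _ PA_indep) _.
- by move=> i; exact: measurable_funPTI (measurable_itv _).
- by case/andP: r01 => r0 r1; rewrite (ltW q0) exprn_ile1.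
rewrite size_iota lee_fin -mulr_natr natrX.
apply: le_trans (ler_wpM2r (exprn_ge0 _ _) (sqr_expr_uphalf_le k r01)) _ => //.
by rewrite -exprMn divfK ?pnatr_eq0 // -expRM_natl mulrN mulrC.
Qed.
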